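(* There is an absolute constant $C>0$ such that the following holds. Let $n,d,k\ge1$, let $\phi:\mathbb{R}\to\mathbb{R}$ be $L$-Lipschitz with $\phi(0)=0$, let $b>0$, and let $x_1,\dots,x_n,x'_1,\dots,x'_n\in\mathbb{R}^d$ satisfy $\|x_i\|_2,\|x'_i\|_2\le b$. For $a>0$ let $\mathcal{G}^k_a=\{A\in\mathbb{R}^{d\times k}:\|A\|_{2,\infty}\le a\}$. Then $$\widehat{\mathfrak{R}}\big(\mathcal{F}_k(\mathcal{G}^k_a)\big)\le C\left(\frac1n+\frac{a^2b^2\sqrt{k}\,L^2}{\sqrt n}\sqrt{\log(2dk)}\,\log\big(2+n\,b^2a^2L^2\big)\right).$$
   Context: For $A\in\mathbb{R}^{d\times k}$ with columns $A_{\cdot 1},\dots,A_{\cdot k}$: $\|A\|_{2,\infty}=\max_{j\le k}\|A_{\cdot j}\|_2$. For $u,v\in\mathbb{R}^k$, $\zeta_k(u,v)=\frac1k\|u-v\|_2^2$. The function $\phi$ is applied coordinatewise to vectors. Given fixed points $x_1,\dots,x_n,x'_1,\dots,x'_n\in\mathbb{R}^d$ and a set $\mathcal{G}\subset\mathbb{R}^{d\times k}$, define $\mathcal{F}_k(\mathcal{G})=\{(\zeta_k(\phi(A^tx_i),\phi(A^tx'_i)))_{i=1}^n : A\in\mathcal{G}\}\subset\mathbb{R}^n$. For a set $\mathcal{F}\subset\mathbb{R}^n$, $\widehat{\mathfrak{R}}(\mathcal{F})=\frac1n\mathbb{E}_\varepsilon\sup_{f\in\mathcal{F}}\sum_{i=1}^n\varepsilon_if_i$,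 where $\varepsilon_1,\dots,\varepsilon_n$ are i.i.d. uniform on $\{-1,1\}$. *)

From HB Require Import structures.
From mathcomp Require Import all_boot all_order all_algebra.
From mathcomp Require Import all_classical all_reals.
From mathcomp Require Import exp Rstruct.
From Stdlib Require Import Reals.
Set Implicit Arguments. Unset Strict Implicit. Unset Printing Implicit Defensive.
Import Order.TTheory GRing.Theory Num.Theory.
Local Open Scope ring_scope.
Local Open Scope classical_set_scope.

Notation R := Rdefinitions.R.

Definition vnorm2 (m : nat) (x : 'cV[R]_m) : R :=
  Num.sqrt (\sum_(i < m) x i 0 ^+ 2).

Definition norm2inf (d k : nat) (A : 'M[R]_(d, k)) : R :=
  \big[Num.max/0]_(j < k) vnorm2 (col j A).

Definition zeta (k : nat) (u v : 'cV[R]_k) : R :=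
  k%:R^-1 * (\sum_(j < k) (u j 0 - v j 0) ^+ 2).

Definition cw (phi : R -> R) (m : nat) (u : 'cV[R]_m) : 'cV[R]_m := map_mx phi u.

Definition Fk (n d k : nat) (phi : R -> R) (x x' : 'I_n -> 'cV[R]_d)
  (G : set 'M[R]_(d, k)) : set ('I_n -> R) :=
  [set f | exists2 A, G A &
     f = (fun i => zeta (cw phi (A^T *m x i)) (cw phi (A^T *m x' i)))].

Definition sgn (b : bool) : R := if b then 1 else -1.

(* empirical Rademacher complexity: expectation over the uniform distribution
   on {-1,1}^n written as the average over all 2^n sign vectors *)
Definition rademacher (n : nat) (F : set ('I_n -> R)) : R :=
  n%:R^-1 * ((2 ^+ n)^-1 *
    \sum_(eps : {ffun 'I_n -> bool})
       sup [set s | exists2 f, F f & s = \sum_(i < n) sgn (eps i) * f i]).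

Definition Gka (d k : nat) (a : R) : set 'M[R]_(d, k) :=
  [set A | norm2inf A <= a].

From mathcomp Require Import all_boot all_order all_algebra.
From mathcomp Require Import all_classical all_reals.
From mathcomp Require Import exp Rstruct.
From mathcomp Require Import ring lra.
Set Implicit Arguments.
Unset Strict Implicit.
Unset Printing Implicit Defensive.
Import Order.TTheory GRing.Theory Num.Theory.
Local Open Scope ring_scope.
Local Open Scope classical_set_scope.

(* Proof of the Rademacher bound for the class F_k(G^k_a); we prove the
   stronger estimate  R(F_k(G^k_a)) <= 8 a^2 b^2 L^2 / sqrt n,  from which
   the stated bound follows with C = 32 since sqrt k >= 1 and the two
   logarithmic factors are at least 1/2.

   A supremum bound for a Rademacher process is stated choice-free as
      [rad_bound]: every selection e |-> t e of indices gives an average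
      signed sum at most X.  Such bounds are stable under sums, nonnegative
      scalings and negation, and satisfy the contraction principle
      (Ledoux-Talagrand), proved one coordinate at a time by pairing each
      sign vector with the one obtained by flipping that coordinate.
   2. For linear functions c |-> <c, x_i> on the Euclidean ball of radius a
      the bound a b sqrt n follows from an AM-GM estimate and
      E (sum_i eps_i y_i)^2 = sum_i y_i^2.
   3. Since phi is L-Lipschitz, phi(0) = 0 and s |-> s^2 is (4 L a b)-Lipschitz
      on [-2 L a b, 2 L a b], contraction turns this into the bound
      8 L^2 a^2 b^2 sqrt n for c |-> (phi <c, x_i> - phi <c, x'_i>)^2.
   4. zeta_k is the average of this function over the columns of A, and each
      column of A in G^k_a lies in the ball of radius a, so the same bound
      holds for F_k(G^k_a); dividing by n gives the estimate above. *)

Section SignAverage.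
Variable n : nat.
Local Notation signs := {ffun 'I_n -> bool}.

Definition avg (F : signs -> R) : R := (2 ^+ n)^-1 * \sum_(e : signs) F e.

Lemma avg_le F G : (forall e, F e <= G e) -> avg F <= avg G.
Proof.
move=> FG; rewrite /avg ler_wpM2l ?invr_ge0 ?exprn_ge0 //.
by apply: ler_sum => e _; exact: FG.
Qed.

Lemma avgD F G : avg (fun e => F e + G e) = avg F + avg G.
Proof. by rewrite /avg big_split /= mulrDr. Qed.

Lemma avgZ c F : avg (fun e => c * F e) = c * avg F.
Proof. by rewrite /avg -mulr_sumr mulrCA. Qed.

Lemma avg_cst c : avg (fun _ => c) = c.
Proof.
rewrite /avg sumr_const card_ffun card_bool card_ord -[c *+ _]mulr_natl natrX.
by rewrite mulrA mulVf ?mul1r // gt_eqF // exprn_gt0.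
Qed.

Lemma avg_sum (I : finType) (F : I -> signs -> R) :
  avg (fun e => \sum_(j : I) F j e) = \sum_(j : I) avg (F j).
Proof. by rewrite /avg exchange_big /= mulr_sumr. Qed.

Lemma avg_reindex F {f : signs -> signs} : involutive f -> avg F = avg (F \o f).
Proof. by move=> fK; rewrite /avg (reindex_inj (inv_inj fK)). Qed.

Definition flip (j : 'I_n) (e : signs) : signs :=
  [ffun i => if i == j then ~~ e i else e i].

Lemma flipK j : involutive (flip j).
Proof. by move=> e; apply/ffunP => i; rewrite !ffunE; case: eqP => // _; exact: negbK. Qed.

Lemma flip_at j e : flip j e j = ~~ e j.
Proof. by rewrite ffunE eqxx. Qed.

Lemma flip_off j e i : i != j -> flip j e i = e i.
Proof. by rewrite ffunE => /negPf ->. Qed.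

Definition negall (e : signs) : signs := [ffun i => ~~ e i].

Lemma negallK : involutive negall.
Proof. by move=> e; apply/ffunP => i; rewrite !ffunE negbK. Qed.

Lemma avg_pair j F : avg F = 2^-1 * avg (fun e => F e + F (flip j e)).
Proof. by rewrite avgD -(avg_reindex F (flipK j)); lra. Qed.

Lemma sgn_neg b : sgn (~~ b) = - sgn b.
Proof. by case: b; rewrite /= ?opprK. Qed.

Lemma avg_sgnM i i' : avg (fun e => sgn (e i) * sgn (e i')) = (i == i')%:R.
Proof.
have [<-|ne] := eqVneq i i'.
  by rewrite -(avg_cst 1); congr avg; apply: funext => e; case: (e i); rewrite /sgn ?mulrNN mulr1.
have opp : avg (fun e => sgn (e i) * sgn (e i')) = - avg (fun e => sgn (e i) * sgn (e i')).
  rewrite {1}(avg_reindex _ (flipK i)) -mulN1r -avgZ; congr avg; apply: funext => e /=.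
  by rewrite flip_at flip_off 1?eq_sym // sgn_neg mulNr mulN1r.
rewrite (_ : false%:R = 0) //; lra.
Qed.

Lemma avg_sq (y : 'I_n -> R) :
  avg (fun e => (\sum_(i < n) sgn (e i) * y i) ^+ 2) = \sum_(i < n) y i ^+ 2.
Proof.
have term i i' :
    avg (fun e => sgn (e i) * y i * (sgn (e i') * y i')) = y i * y i' * (i == i')%:R.
  by rewrite -avg_sgnM -avgZ; congr avg; apply: funext => e; ring.
under eq_fun => e do rewrite expr2 mulr_suml; rewrite avg_sum; apply: eq_bigr => i _.
under eq_fun => e do rewrite mulr_sumr; rewrite avg_sum.
under eq_bigr => i' _ do rewrite term.
rewrite (bigD1 i) //= eqxx mulr1 big1 ?addr0 ?expr2 // => i' ne.
by rewrite eq_sym (negPf ne) mulr0.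
Qed.

End SignAverage.
Arguments negall {n}.
Arguments negallK {n}.

Section RademacherBound.
Variables (n : nat) (T : Type).
Local Notation signs := {ffun 'I_n -> bool}.

Definition rad_sum (u : T -> 'I_n -> R) (t : signs -> T) (e : signs) : R :=
  \sum_(i < n) sgn (e i) * u (t e) i.

(* [rad_bound G u X] says E_eps sup_(s in G) sum_i eps_i u s i <= X; it is
   stated through selections e |-> t e so that no supremum is needed. *)
Definition rad_bound (G : set T) (u : T -> 'I_n -> R) (X : R) : Prop :=
  forall t : signs -> T, (forall e, G (t e)) -> avg (rad_sum u t) <= X.

Lemma rad_bound_ext G u v X :
  (forall s, G s -> u s =1 v s) -> rad_bound G u X -> rad_bound G v X.
Proof.
move=> uv hu t Gt; suff -> : rad_sum v t = rad_sum u t by exact: hu.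
by apply: funext => e; apply: eq_bigr => i _; rewrite (uv _ (Gt e)).
Qed.

Lemma rad_boundZ G u X c :
  0 <= c -> rad_bound G u X -> rad_bound G (fun s i => c * u s i) (c * X).
Proof.
move=> c_ge0 hu t Gt.
suff -> : rad_sum (fun s i => c * u s i) t = fun e => c * rad_sum u t e.
  by rewrite avgZ ler_wpM2l // hu.
by apply: funext => e; rewrite /rad_sum mulr_sumr; apply: eq_bigr => i _; rewrite mulrCA.
Qed.

Lemma rad_boundD G u v X Y : rad_bound G u X -> rad_bound G v Y ->
  rad_bound G (fun s i => u s i + v s i) (X + Y).
Proof.
move=> hu hv t Gt.
suff -> : rad_sum (fun s i => u s i + v s i) t = fun e => rad_sum u t e + rad_sum v t e.
  by rewrite avgD lerD // ?hu ?hv.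
by apply: funext => e; rewrite /rad_sum -big_split; apply: eq_bigr => i _; rewrite mulrDr.
Qed.

(* The sign distribution is symmetric, so negating the process is harmless. *)
Lemma rad_boundN G u X : rad_bound G u X -> rad_bound G (fun s i => - u s i) X.
Proof.
move=> hu t Gt; rewrite (avg_reindex _ negallK).
suff -> : rad_sum (fun s i => - u s i) t \o negall = rad_sum u (t \o negall).
  by apply: hu => e; exact: Gt.
by apply: funext => e; apply: eq_bigr => i _; rewrite /= ffunE sgn_neg mulrNN.
Qed.

(* On each
   pair {e, flip j e} the selection is reordered so that the larger value of
   u at j receives the sign +1. *)
Lemma contraction_at (j : 'I_n) (G : set T) (u v : T -> 'I_n -> R) (X : R) :
  (forall s i, i != j -> v s i = u s i) ->
  (forall s s', G s -> G s' -> `|v s j - v s' j| <= `|u s j - u s' j|) ->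
  rad_bound G u X -> rad_bound G v X.
Proof.
move=> v_off v_lip hu t Gt.
pose top (e : signs) : signs := if e j then e else flip j e.
pose t' (e : signs) := if u (t (top e)) j < u (t (flip j (top e))) j then t (flip j e) else t e.
have Gt' e : G (t' e) by rewrite /t'; case: ifP.
apply: le_trans (hu t' Gt').
pose rest s (e : signs) := \sum_(i < n | i != j) sgn (e i) * u s i.
have rest_flip s e : rest s (flip j e) = rest s e.
  by apply: eq_bigr => i ij; rewrite flip_off.
have split_u s e : rad_sum u s e = sgn (e j) * u (s e) j + rest (s e) e.
  by rewrite /rad_sum (bigD1 j).
have split_v s e : rad_sum v s e = sgn (e j) * v (s e) j + rest (s e) e.
  by rewrite /rad_sum (bigD1 j) //; congr (_ + _); apply: eq_bigr => i ij; rewrite v_off.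
have pair_le (e : signs) : e j ->
    rad_sum v t e + rad_sum v t (flip j e) <= rad_sum u t' e + rad_sum u t' (flip j e).
  move=> ej; have top_e : top e = e by rewrite /top ej.
  have top_f : top (flip j e) = e by rewrite /top flip_at ej /= flipK.
  rewrite !split_u !split_v !rest_flip flip_at ej /t' top_e top_f flipK /sgn /=.
  have vu := le_trans (ler_norm _) (v_lip _ _ (Gt e) (Gt (flip j e))).
  case: ltP => hlt.
  - by rewrite ltr0_norm ?subr_lt0 // in vu; lra.
  - by rewrite ger0_norm ?subr_ge0 // in vu; lra.
rewrite (avg_pair j) [leRHS](avg_pair j) ler_wpM2l ?invr_ge0 //.
apply: avg_le => e; case ej: (e j); first exact: pair_le.
have := pair_le (flip j e); rewrite flip_at ej flipK => /(_ isT).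
by rewrite addrC [leRHS]addrC.
Qed.

Lemma contraction (G : set T) (u v : T -> 'I_n -> R) (X : R) :
  (forall s s' i, G s -> G s' -> `|v s i - v s' i| <= `|u s i - u s' i|) ->
  rad_bound G u X -> rad_bound G v X.
Proof.
move=> v_lip hu.
pose w m s (i : 'I_n) := if (i < m)%N then v s i else u s i.
suff /(_ n) : forall m, rad_bound G (w m) X.
  by apply: rad_bound_ext => s _ i; rewrite /w ltn_ord.
elim=> [|m IH]; first by apply: rad_bound_ext hu => s _ i.
have [lt_mn|le_nm] := ltnP m n; last first.
  apply: rad_bound_ext IH => s _ i.
  have lt_im : (i < m)%N := leq_trans (ltn_ord i) le_nm.
  by rewrite /w lt_im ltnS ltnW.
apply: (contraction_at (j := Ordinal lt_mn) _ _ IH) => [s i ij|s s' Gs Gs'].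
  by rewrite /w ltnS leq_eqVlt (negbTE (ij : (i : nat) != m)).
by rewrite /w /= ltnSn ltnn; exact: v_lip.
Qed.

End RademacherBound.

Definition dot d (c y : 'cV[R]_d) : R := \sum_(l < d) c l 0 * y l 0.

Lemma amgm_term (c y lam : R) : 0 < lam -> 2 * `|c * y| <= lam * c ^+ 2 + y ^+ 2 / lam.
Proof.
move=> lam_gt0; rewrite normrM -(real_normK (num_real c)) -(real_normK (num_real y)).
rewrite -subr_ge0 (_ : _ - _ = (lam * `|c| - `|y|) ^+ 2 / lam).
  by rewrite divr_ge0 ?sqr_ge0 // ltW.
by field; rewrite gt_eqF.
Qed.

Lemma amgm_sum d (f g : 'I_d -> R) (lam : R) : 0 < lam ->
  2 * `|\sum_(l < d) f l * g l| <=
  lam * \sum_(l < d) f l ^+ 2 + (\sum_(l < d) g l ^+ 2) / lam.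
Proof.
move=> lam_gt0; apply: le_trans (_ : 2 * \sum_l `|f l * g l| <= _).
  by rewrite ler_wpM2l // ler_norm_sum.
rewrite !mulr_sumr mulr_suml -big_split /=.
by apply: ler_sum => l _; exact: amgm_term.
Qed.

(* Cauchy-Schwarz, from AM-GM with the weight b / a. *)
Lemma cauchy_schwarz d (f g : 'I_d -> R) (a b : R) : 0 < a -> 0 < b ->
  \sum_(l < d) f l ^+ 2 <= a ^+ 2 -> \sum_(l < d) g l ^+ 2 <= b ^+ 2 ->
  `|\sum_(l < d) f l * g l| <= a * b.
Proof.
move=> a_gt0 b_gt0 hf hg.
have lam_gt0 : 0 < b / a by rewrite divr_gt0.
have := amgm_sum f g lam_gt0.
have e1 : b / a * a ^+ 2 = a * b by field; rewrite gt_eqF.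
have e2 : b ^+ 2 / (b / a) = a * b by field; rewrite !gt_eqF.
have h1 : b / a * \sum_l f l ^+ 2 <= a * b by rewrite -e1 ler_wpM2l // ltW.
have h2 : (\sum_l g l ^+ 2) / (b / a) <= a * b.
  by rewrite -e2 ler_wpM2r // invr_ge0 ltW.
lra.
Qed.

Lemma sumsq_le d (y : 'cV[R]_d) (b : R) :
  vnorm2 y <= b -> \sum_(l < d) y l 0 ^+ 2 <= b ^+ 2.
Proof.
rewrite /vnorm2 => hy; have y2_ge0 : 0 <= \sum_(l < d) y l 0 ^+ 2.
  by rewrite sumr_ge0 // => l _; exact: sqr_ge0.
by rewrite -(sqr_sqrtr y2_ge0) ler_sqr // ?nnegrE ?sqrtr_ge0 // (le_trans (sqrtr_ge0 _) hy).
Qed.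

Definition ball d (a : R) : set 'cV[R]_d := [set c | vnorm2 c <= a].

(* E |sum_i eps_i x_i|^2 = sum_i |x_i|^2 <= n b^2. *)
Lemma avg_sq_signed_sum n d (x : 'I_n -> 'cV[R]_d) (b : R) :
  (forall i, vnorm2 (x i) <= b) ->
  avg (fun e => \sum_(l < d) (\sum_(i < n) sgn (e i) * x i l 0) ^+ 2) <= n%:R * b ^+ 2.
Proof.
move=> x_le; rewrite avg_sum; under eq_bigr => l _ do rewrite (avg_sq (fun i => x i l 0)).
rewrite exchange_big /=; apply: le_trans (ler_sum _ (fun i _ => sumsq_le (x_le i))) _.
by rewrite sumr_const card_ord mulr_natl.
Qed.

(* The inner product
   with s_eps = sum_i eps_i x_i is bounded by AM-GM with a weight lam
   balancing |c|^2 <= a^2 against E |s_eps|^2 <= n b^2. *)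
Lemma rad_bound_linear n d (x : 'I_n -> 'cV[R]_d) (a b : R) :
  (0 < n)%N -> 0 < a -> 0 < b -> (forall i, vnorm2 (x i) <= b) ->
  rad_bound (ball a) (fun c i => dot c (x i)) (a * b * Num.sqrt n%:R).
Proof.
move=> n_gt0 a_gt0 b_gt0 x_le t Gt.
pose s (e : {ffun 'I_n -> bool}) (l : 'I_d) := \sum_(i < n) sgn (e i) * x i l 0.
have sqrtn_gt0 : 0 < Num.sqrt (n%:R : R) by rewrite sqrtr_gt0 ltr0n.
pose lam := b * Num.sqrt (n%:R : R) / a.
have lam_gt0 : 0 < lam by rewrite divr_gt0 // mulr_gt0.
have pointwise e : rad_sum (fun c i => dot c (x i)) t e <=
    lam * a ^+ 2 / 2 + (2 * lam)^-1 * \sum_(l < d) s e l ^+ 2.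
  have -> : rad_sum (fun c i => dot c (x i)) t e = \sum_(l < d) t e l 0 * s e l.
    rewrite /rad_sum /dot; under eq_bigr => i _ do rewrite mulr_sumr.
    rewrite exchange_big /=; apply: eq_bigr => l _; rewrite mulr_sumr.
    by apply: eq_bigr => i _; ring.
  have /= := amgm_sum (fun l => t e l 0) (s e) lam_gt0.
  have := ler_norm (\sum_(l < d) t e l 0 * s e l).
  have : lam * \sum_(l < d) t e l 0 ^+ 2 <= lam * a ^+ 2.
    by rewrite ler_wpM2l ?sumsq_le ?(Gt e) // ltW.
  by rewrite [(2 * lam)^-1]invfM; lra.
apply: le_trans (avg_le pointwise) _; rewrite avgD avg_cst avgZ.
have sqrt_sq : (n%:R : R) = Num.sqrt (n%:R : R) ^+ 2 by rewrite sqr_sqrtr // ler0n.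
have -> : a * b * Num.sqrt n%:R = lam * a ^+ 2 / 2 + (2 * lam)^-1 * (n%:R * b ^+ 2).
  by rewrite [in RHS]sqrt_sq /lam; field; rewrite !gt_eqF.
have c_ge0 : 0 <= (2 * lam)^-1 by rewrite invr_ge0 mulr_ge0 // ltW.
by rewrite lerD2l ler_wpM2l //; exact: avg_sq_signed_sum.
Qed.

Lemma lipschitz_ge0 (phi : R -> R) (L : R) :
  (forall s t : R, `|phi s - phi t| <= L * `|s - t|) -> 0 <= L.
Proof. by move=> /(_ 1 0); rewrite subr0 normr1 mulr1; apply: le_trans. Qed.

Lemma sqr_lipschitz (w w' B : R) : `|w| <= B -> `|w'| <= B ->
  `|w ^+ 2 - w' ^+ 2| <= 2 * B * `|w - w'|.
Proof.
move=> hw hw'; rewrite (_ : _ - _ = (w - w') * (w + w')); last by ring.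
by rewrite normrM mulrC ler_wpM2r // (le_trans (ler_normD _ _)) //; lra.
Qed.

Section SquaredIncrement.
Variables (n d : nat) (phi : R -> R) (L : R) (x x' : 'I_n -> 'cV[R]_d) (a b : R).
Hypothesis phi_lip : forall s t : R, `|phi s - phi t| <= L * `|s - t|.
Hypothesis phi0 : phi 0 = 0.
Hypotheses (a_gt0 : 0 < a) (b_gt0 : 0 < b).
Hypotheses (x_le : forall i, vnorm2 (x i) <= b) (x'_le : forall i, vnorm2 (x' i) <= b).

Definition sq_incr (c : 'cV[R]_d) (i : 'I_n) : R :=
  (phi (dot c (x i)) - phi (dot c (x' i))) ^+ 2.

Lemma phi_dot_le (c y : 'cV[R]_d) : ball a c -> vnorm2 y <= b ->
  `|phi (dot c y)| <= L * (a * b).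
Proof.
move=> hc hy; have := phi_lip (dot c y) 0; rewrite phi0 !subr0 => /le_trans; apply.
rewrite ler_wpM2l ?(lipschitz_ge0 phi_lip) // cauchy_schwarz //; exact: sumsq_le.
Qed.

(* By contraction, phi (<c, y_i>) inherits the linear bound scaled by L. *)
Lemma rad_bound_phi (y : 'I_n -> 'cV[R]_d) : (0 < n)%N -> (forall i, vnorm2 (y i) <= b) ->
  rad_bound (ball a) (fun c i => phi (dot c (y i))) (L * (a * b * Num.sqrt n%:R)).
Proof.
move=> n_gt0 y_le; have L_ge0 := lipschitz_ge0 phi_lip.
apply: contraction (rad_boundZ L_ge0 (rad_bound_linear n_gt0 a_gt0 b_gt0 y_le)).
by move=> c c' i _ _; rewrite -mulrBr normrM (ger0_norm L_ge0); exact: phi_lip.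
Qed.

(* The increments are bounded by B = 2 L a b, so squaring them is a
   2B-contraction of the increments, whose bound is twice that of phi. *)
Lemma rad_bound_sq_incr : (0 < n)%N ->
  rad_bound (ball a) sq_incr (8 * L ^+ 2 * a ^+ 2 * b ^+ 2 * Num.sqrt n%:R).
Proof.
move=> n_gt0; pose B := 2 * (L * (a * b)).
have B2_ge0 : 0 <= 2 * B by rewrite !mulr_ge0 ?(lipschitz_ge0 phi_lip) // ltW.
have incr_le c i : ball a c -> `|phi (dot c (x i)) - phi (dot c (x' i))| <= B.
  move=> hc; apply: le_trans (ler_normB _ _) _.
  by have := phi_dot_le hc (x_le i); have := phi_dot_le hc (x'_le i); rewrite /B; lra.
have incr := rad_boundZ B2_ge0
  (rad_boundD (rad_bound_phi n_gt0 x_le) (rad_boundN (rad_bound_phi n_gt0 x'_le))).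
rewrite (_ : 8 * L ^+ 2 * a ^+ 2 * b ^+ 2 * Num.sqrt n%:R =
    2 * B * (L * (a * b * Num.sqrt n%:R) + L * (a * b * Num.sqrt n%:R))).
  apply: contraction incr => c c' i hc hc'.
  rewrite /sq_incr -mulrBr normrM (ger0_norm B2_ge0).
  exact: sqr_lipschitz (incr_le _ _ hc) (incr_le _ _ hc').
by rewrite /B; ring.
Qed.

End SquaredIncrement.

Lemma zeta_cols n d k (phi : R -> R) (x x' : 'I_n -> 'cV[R]_d) (A : 'M[R]_(d, k)) i :
  zeta (cw phi (A^T *m x i)) (cw phi (A^T *m x' i)) =
  k%:R^-1 * \sum_(j < k) sq_incr phi x x' (col j A) i.
Proof.
rewrite /zeta /cw /sq_incr; congr (_ * _); apply: eq_bigr => j _.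
by rewrite !mxE /dot; congr ((phi _ - phi _) ^+ 2); apply: eq_bigr => l _; rewrite !mxE.
Qed.

Lemma col_in_ball d k (A : 'M[R]_(d, k)) (a : R) j : Gka a A -> ball a (col j A).
Proof. by apply: le_trans; exact: (le_bigmax 0 (fun j => vnorm2 (col j A)) j). Qed.

Lemma rad_bound_Fk n d k (phi : R -> R) (x x' : 'I_n -> 'cV[R]_d) (a X : R) :
  (0 < k)%N -> rad_bound (ball a) (sq_incr phi x x') X ->
  rad_bound (@Gka d k a) (fun A i => zeta (cw phi (A^T *m x i)) (cw phi (A^T *m x' i))) X.
Proof.
move=> k_gt0 hX t Gt; have k_gt0' : 0 < (k%:R : R) by rewrite ltr0n.
have -> : rad_sum (fun A i => zeta (cw phi (A^T *m x i)) (cw phi (A^T *m x' i))) t =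
    fun e => k%:R^-1 * \sum_(j < k) rad_sum (sq_incr phi x x') (fun e => col j (t e)) e.
  apply: funext => e; rewrite /rad_sum.
  under eq_bigr => i _ do rewrite zeta_cols mulrCA mulr_sumr.
  by rewrite -mulr_sumr exchange_big.
rewrite avgZ avg_sum; apply: le_trans (_ : k%:R^-1 * \sum_(j < k) X <= _).
  rewrite ler_wpM2l ?invr_ge0 ?ler0n //; apply: ler_sum => j _.
  by apply: hX => e; exact: col_in_ball.
by rewrite sumr_const card_ord -[X *+ _]mulr_natl mulrA mulVf ?mul1r // gt_eqF.
Qed.

(* Every nonempty set of reals has elements within del of its supremum (with
   the library's convention sup E = 0 when E is unbounded). *)
Lemma sup_approx (E : set R) (del : R) : 0 < del -> E !=set0 ->
  exists2 y, E y & sup E - del <= y.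
Proof.
move=> del_gt0 E_ne; have [hs|hs] := pselect (has_sup E).
  by have [y Ey lt_y] := sup_adherent del_gt0 hs; exists y => //; exact: ltW.
rewrite sup_out // sub0r.
have /existsNP [y /not_implyP [Ey y_gt]] : ~ (forall y, E y -> y <= - del).
  by move=> ub; apply: hs; split => //; exists (- del).
by exists y => //; rewrite ltW // ltNge; apply/negP.
Qed.

(* The empirical Rademacher complexity of a nonempty indexed class is at most
   n^-1 times any [rad_bound] of the process; selections nearly attaining the
   suprema exist by choice. *)
Lemma rademacher_le n T (G : set T) (u : T -> 'I_n -> R) (X : R) :
  G !=set0 -> rad_bound G u X ->
  rademacher [set f | exists2 s, G s & f = u s] <= n%:R^-1 * X.
Proof.
move=> [s0 Gs0] hX; rewrite /rademacher ler_wpM2l ?invr_ge0 ?ler0n //.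
apply/ler_addgt0Pr => del del_gt0.
pose S (e : {ffun 'I_n -> bool}) := [set r | exists2 f,
  [set f | exists2 s, G s & f = u s] f & r = \sum_(i < n) sgn (e i) * f i].
have near_sup e : exists s, G s /\ sup (S e) - del <= \sum_(i < n) sgn (e i) * u s i.
  have S_ne : S e !=set0.
    by exists (\sum_(i < n) sgn (e i) * u s0 i); exists (u s0) => //; exists s0.
  by have [_ [_ [s Gs ->] ->] le_r] := sup_approx del_gt0 S_ne; exists s.
have [t Gt] := choice near_sup.
apply: le_trans (_ : avg (fun e => rad_sum u t e + del) <= _).
  by apply: avg_le => e; have [_ le_e] := Gt e; rewrite /rad_sum; lra.
by rewrite avgD avg_cst lerD2r; apply: hX => e; exact: (Gt e).1.
Qed.

(* ln y >= 1/2 for y >= 2, since ln 2 = - ln (1 - 1/2) >= 1/2. *)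
Lemma ln_ge_half (y : R) : 2 <= y -> 1 / 2 <= ln y.
Proof.
move=> y_ge2; have : ln (1 + - (1 / 2) : R) <= - (1 / 2) by apply: le_ln1Dx; lra.
rewrite (_ : 1 + - (1 / 2) = 2^-1 :> R); last by field.
rewrite lnV ?posrE // => ln2_ge; apply: le_trans (_ : ln 2 <= _); first lra.
by rewrite ler_ln ?posrE //; lra.
Qed.

Lemma sqrt_ln_ge_half (y : R) : 2 <= y -> 1 / 2 <= Num.sqrt (ln y).
Proof.
move=> y_ge2; rewrite (_ : 1 / 2 = Num.sqrt ((1 / 2) ^+ 2)).
  by apply: ler_wsqrtr; have := ln_ge_half y_ge2; lra.
by rewrite sqrtr_sqr ger0_norm ?divr_ge0.
Qed.

Lemma corollary_slack (Q m s l1 l2 : R) : 0 <= Q -> 0 <= m -> 1 <= s ->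
  1 / 2 <= l1 -> 1 / 2 <= l2 -> 8 * Q <= 32 * (m + Q * s * l1 * l2).
Proof.
move=> Q_ge0 m_ge0 s_ge1 l1_ge l2_ge.
have [s_ge0 l1_ge0] : 0 <= s /\ 0 <= l1 by split; lra.
have Qs_ge : Q <= Q * s by rewrite -{1}(mulr1 Q) ler_wpM2l.
have Qsl1_ge : Q * s / 2 <= Q * s * l1 by rewrite ler_wpM2l ?mulr_ge0 //; lra.
have Qsl1l2_ge : Q * s * l1 / 2 <= Q * s * l1 * l2.
  by rewrite ler_wpM2l ?mulr_ge0 //; lra.
lra.
Qed.

Lemma estimate_le_rhs n d k (a b L : R) : (1 <= n)%N -> (1 <= d)%N -> (1 <= k)%N ->
  n%:R^-1 * (8 * L ^+ 2 * a ^+ 2 * b ^+ 2 * Num.sqrt n%:R) <=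
    32 * (n%:R^-1 +
          a ^+ 2 * b ^+ 2 * Num.sqrt k%:R * L ^+ 2 / Num.sqrt n%:R
          * Num.sqrt (ln (2 * d%:R * k%:R))
          * ln (2 + n%:R * b ^+ 2 * a ^+ 2 * L ^+ 2)).
Proof.
move=> n_ge1 d_ge1 k_ge1; have sqrtn_gt0 : 0 < Num.sqrt (n%:R : R) by rewrite sqrtr_gt0 ltr0n.
have sqrt_sq : (n%:R : R) = Num.sqrt (n%:R : R) ^+ 2 by rewrite sqr_sqrtr // ler0n.
rewrite (_ : a ^+ 2 * b ^+ 2 * _ * L ^+ 2 / _ =
             a ^+ 2 * b ^+ 2 * L ^+ 2 / Num.sqrt n%:R * Num.sqrt k%:R); last first.
  by field; rewrite gt_eqF.
rewrite (_ : n%:R^-1 * _ = 8 * (a ^+ 2 * b ^+ 2 * L ^+ 2 / Num.sqrt n%:R)); last first.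
  by rewrite {1}sqrt_sq; field; rewrite gt_eqF.
apply: corollary_slack.
- by rewrite divr_ge0 ?sqrtr_ge0 // -!exprMn sqr_ge0.
- by rewrite invr_ge0 ler0n.
- by rewrite -[leLHS]sqrtr1; apply: ler_wsqrtr; rewrite ler1n.
- have [d_ge1' k_ge1'] : (1 : R) <= d%:R /\ (1 : R) <= k%:R by rewrite !ler1n.
  by apply: sqrt_ln_ge_half; nra.
- have n_ge0 : (0 : R) <= n%:R by rewrite ler0n.
  by apply: ln_ge_half; have := sqr_ge0 (b * a * L); nra.
Qed.

Lemma Gka_ne d k (a : R) : 0 < a -> @Gka d k a !=set0.
Proof.
move=> a_gt0; exists 0; apply/bigmax_leP; split => [|j _]; first exact: ltW.
by rewrite /vnorm2 big1 ?sqrtr0 ?ltW // => l _; rewrite !mxE expr0n.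
Qed.

Theorem corollary1 :
  exists C : R, 0 < C /\
  forall (n d k : nat), (1 <= n)%N -> (1 <= d)%N -> (1 <= k)%N ->
  forall (phi : R -> R) (L : R),
    (forall s t : R, `|phi s - phi t| <= L * `|s - t|) -> phi 0 = 0 ->
  forall (b : R), 0 < b ->
  forall (x x' : 'I_n -> 'cV[R]_d),
    (forall i, vnorm2 (x i) <= b) -> (forall i, vnorm2 (x' i) <= b) ->
  forall (a : R), 0 < a ->
    rademacher (Fk phi x x' (@Gka d k a)) <=
      C * (n%:R^-1 +
           a ^+ 2 * b ^+ 2 * Num.sqrt k%:R * L ^+ 2 / Num.sqrt n%:R
           * Num.sqrt (ln (2 * d%:R * k%:R))
           * ln (2 + n%:R * b ^+ 2 * a ^+ 2 * L ^+ 2)).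
Proof.
exists 32; split => // n d k n_ge1 d_ge1 k_ge1 phi L phi_lip phi0 b b_gt0 x x' x_le x'_le
  a a_gt0.
have sq_incr_bd := rad_bound_sq_incr phi_lip phi0 a_gt0 b_gt0 x_le x'_le n_ge1.
apply: le_trans (rademacher_le (Gka_ne d k a_gt0) (rad_bound_Fk k_ge1 sq_incr_bd)) _.
exact: estimate_le_rhs.
Qed.
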